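(* Let $\mathcal H_A$ be a finite-dimensional Hilbert space, $N\ge 1$, and let $\mathcal F(A)\subseteq\mathcal D(\mathcal H_A)$ be a set of free states and $\mathcal F(A_1\dots A_N)\subseteq\mathcal D(\mathcal H_A^{\otimes N})$ a set of $N$-partite free states. Let $\mathcal F'(A)\subseteq\mathcal F(A)$ be affine and let $\Delta'$ be a resource-censoring map for $(\mathcal F(A),\mathcal F'(A))$ satisfying the standing assumptions below. Then the censorship implemented by $(\Delta')^{\otimes N}$ is breakable if and only if $\mathcal F'(A_1\dots A_N)\setminus\mathcal F(A_1\dots A_N)\neq\emptyset$, where $\mathcal F'(A_1\dots A_N)=\mathrm{Aff}\big(\mathcal F'(A)\otimes\dots\otimes\mathcal F'(A)\big)$ ($N$ factors).
   Context: For a finite-dimensional Hilbert space $\mathcal H$, $\mathcal D(\mathcal H)$ denotes the set of density operators (positive semidefinite, unit trace) on $\mathcal H$. For a set $S\subseteq\mathcal D(\mathcal H)$, its affine hull is $\mathrm{Aff}(S)=\{\sum_a t_a\sigma_a:\ \text{finitely many }\sigma_a\in S,\ t_a\in\mathbb R,\ \sum_a t_a=1\}\cap\mathcal D(\mathcal H)$, and its convex hull $\mathrm{Conv}(S)$ is defined the same way but with $t_a\ge 0$. A set $S$ is called affine if $\mathrm{Aff}(S)=S$. For sets $S_1,\dots,S_N$ of states, $S_1\otimes\dots\otimes S_N=\{\rho_1\otimes\dots\otimes\rho_N:\rho_a\in S_a\}$. A channel is a linear completely positive trace-preserving map. Each of $N$ senders $A_1,\dots,A_N$ holds a copy of the system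 $A$ (Hilbert space $\mathcal H_A$). A resource-censoring (RC) map for $(\mathcal F(A),\mathcal F'(A))$, with $\mathcal F'(A)\subseteq\mathcal F(A)$ affine, is a channel $\Delta'$ on operators on $\mathcal H_A$ with $\Delta'(\rho)\in\mathcal F(A)$ for all $\rho\in\mathcal D(\mathcal H_A)$ and $\Delta'(\sigma)=\sigma$ for all $\sigma\in\mathcal F'(A)$. Standing assumptions: $\Delta'\circ\Delta'=\Delta'$, and $\mathcal F'(A)$ is exactly the set of density operators fixed by $\Delta'$. The censorship is called breakable if there exists $\rho\in\mathcal D(\mathcal H_A^{\otimes N})$ with $\rho\notin\mathcal F(A_1\dots A_N)$ and $(\Delta')^{\otimes N}(\rho)=\rho$; otherwise it is called unbreakable. *)

(* Scalars: an arbitrary numClosedFieldType C (e.g. the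
   complex numbers); operators on H_A = C^d are 'M[C]_d, operators on
   H_A^{(x)N} are 'M[C]_(tdim d N) with the standard Kronecker ordering of
   mathcomp-real-closed's mxtens. *)
From HB Require Import structures.
From mathcomp Require Import all_boot all_order all_algebra.
From mathcomp Require Export mxtens.
Set Implicit Arguments. Unset Strict Implicit. Unset Printing Implicit Defensive.
Import Order.TTheory GRing.Theory Num.Theory.
Local Open Scope ring_scope.

Section Defs.
Variable C : numClosedFieldType.

Definition adjmx {m n} (A : 'M[C]_(m, n)) : 'M[C]_(n, m) := map_mx Num.conj A^T.

Definition psd {n} (X : 'M[C]_n) : Prop :=
  adjmx X = X /\ forall v : 'cV[C]_n, 0 <= (adjmx v *m X *m v) 0 0.

Definition density {n} (X : 'M[C]_n) : Prop := psd X /\ \tr X = 1.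

Definition Aff {n} (S : 'M[C]_n -> Prop) : 'M[C]_n -> Prop := fun X =>
  (exists (k : nat) (t : 'I_k -> C) (s : 'I_k -> 'M[C]_n),
      (forall a, S (s a)) /\ (forall a, t a \is Num.real) /\
      \sum_(a < k) t a = 1 /\ X = \sum_(a < k) t a *: s a)
  /\ density X.

Definition affine {n} (S : 'M[C]_n -> Prop) : Prop :=
  forall X, Aff S X <-> S X.

Definition tens_map {m n} (Phi : 'M[C]_m -> 'M[C]_m) (Psi : 'M[C]_n -> 'M[C]_n)
  (X : 'M[C]_(m * n)) : 'M[C]_(m * n) :=
  \sum_(a < m) \sum_(b < m) \sum_(c < n) \sum_(e < n)
     X (mxtens_index (a, c)) (mxtens_index (b, e))
       *: (Phi (delta_mx a b) *t Psi (delta_mx c e)).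

Fixpoint tdim (d k : nat) : nat := if k is k'.+1 then (d * tdim d k')%N else 1%N.

Lemma tdim_expn d k : tdim d k = (tdim d k)%N.
Proof. by elim: k => [|k IH] //=; rewrite IH expnS. Qed.

Fixpoint tens_pow_map {d} (Phi : 'M[C]_d -> 'M[C]_d) (k : nat)
  : 'M[C]_(tdim d k) -> 'M[C]_(tdim d k) :=
  match k return 'M[C]_(tdim d k) -> 'M[C]_(tdim d k) with
  | 0 => fun X => X
  | k'.+1 => tens_map Phi (@tens_pow_map d Phi k')
  end.

Fixpoint tens_pow_set {d} (S : 'M[C]_d -> Prop) (k : nat) : 'M[C]_(tdim d k) -> Prop :=
  match k return 'M[C]_(tdim d k) -> Prop with
  | 0 => fun X => X = 1
  | k'.+1 => fun X => exists rho Y, S rho /\ @tens_pow_set d S k' Y /\ X = rho *t Y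
  end.

Definition completely_positive {d} (Phi : 'M[C]_d -> 'M[C]_d) : Prop :=
  forall (k : nat) (X : 'M[C]_(k * d)), psd X -> psd (tens_map (fun Y : 'M[C]_k => Y) Phi X).

Definition channel {d} (Phi : 'M[C]_d -> 'M[C]_d) : Prop :=
  linear Phi /\ completely_positive Phi /\ (forall X, \tr (Phi X) = \tr X).

Definition RC_map {d} (F F' : 'M[C]_d -> Prop) (Delta : 'M[C]_d -> 'M[C]_d) : Prop :=
  channel Delta /\ (forall rho, density rho -> F (Delta rho)) /\
  (forall sigma, F' sigma -> Delta sigma = sigma).

Definition breakable {d} (N : nat) (FN : 'M[C]_(tdim d N) -> Prop)
  (Delta : 'M[C]_d -> 'M[C]_d) : Prop :=
  exists rho : 'M[C]_(tdim d N), density rho /\ ~ FN rho /\ @tens_pow_map d Delta N rho = rho.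

End Defs.

Arguments tens_pow_map {C d} Phi k _.
Arguments tens_pow_set {C d} S k _.
Arguments breakable {C d} N FN Delta.

(* Every operator is a complex combination of density operators, and Delta'
   maps density operators into F'(A) (their images are states fixed by the
   idempotent Delta').  Hence the range of Delta'^{(x)N}, i.e. its set of fixed
   points, is the complex span of F'(A)^{(x)N}.  A fixed state is Hermitian of
   unit trace, and so are the product states spanning it; taking real parts of
   the coefficients turns the complex combination into a real affine one.
   Conversely, affine combinations of fixed product states are fixed. *)
From HB Require Import structures.
From mathcomp Require Import all_boot all_order all_algebra.
From mathcomp Require Import ring.
Import Order.TTheory GRing.Theory Num.Theory.
Local Open Scope ring_scope.
Set Implicit Arguments. Unset Strict Implicit. Unset Printing Implicit Defensive.

Section Adjoint.
Variable C : numClosedFieldType.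

Lemma adjmxK m n (A : 'M[C]_(m, n)) : adjmx (adjmx A) = A.
Proof. by apply/matrixP=> i j; rewrite /adjmx !mxE conjCK. Qed.

Lemma adjmxM m n p (A : 'M[C]_(m, n)) (B : 'M[C]_(n, p)) :
  adjmx (A *m B) = adjmx B *m adjmx A.
Proof.
apply/matrixP=> i j; rewrite /adjmx !mxE rmorph_sum; apply: eq_bigr => k _.
by rewrite !mxE rmorphM mulrC.
Qed.

Lemma adjmxZ m n c (A : 'M[C]_(m, n)) : adjmx (c *: A) = c^* *: adjmx A.
Proof. by apply/matrixP=> i j; rewrite /adjmx !mxE rmorphM. Qed.

Lemma adjmx_sum m n I (r : seq I) (P : pred I) (F : I -> 'M[C]_(m, n)) :
  adjmx (\sum_(i <- r | P i) F i) = \sum_(i <- r | P i) adjmx (F i).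
Proof.
apply/matrixP=> i j; rewrite /adjmx !mxE !summxE rmorph_sum.
by apply: eq_bigr => k _; rewrite !mxE.
Qed.

Lemma adjmx1 n : adjmx (1 : 'M[C]_n) = 1.
Proof. by apply/matrixP=> i j; rewrite /adjmx !mxE eq_sym rmorph_nat. Qed.

Lemma adjmx_tens m n p q (A : 'M[C]_(m, n)) (B : 'M[C]_(p, q)) :
  adjmx (A *t B) = adjmx A *t adjmx B.
Proof. by apply/matrixP=> i j; rewrite /adjmx !mxE rmorphM. Qed.

End Adjoint.

Section Kronecker.
Variable C : numClosedFieldType.

Lemma tensmxDl m n p q (A1 A2 : 'M[C]_(m, n)) (B : 'M[C]_(p, q)) :
  (A1 + A2) *t B = A1 *t B + A2 *t B.
Proof. by apply/matrixP=> i j; rewrite !mxE mulrDl. Qed.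

Lemma tensmxDr m n p q (A : 'M[C]_(m, n)) (B1 B2 : 'M[C]_(p, q)) :
  A *t (B1 + B2) = A *t B1 + A *t B2.
Proof. by apply/matrixP=> i j; rewrite !mxE mulrDr. Qed.

Lemma tensmxZl m n p q c (A : 'M[C]_(m, n)) (B : 'M[C]_(p, q)) :
  (c *: A) *t B = c *: (A *t B).
Proof. by apply/matrixP=> i j; rewrite !mxE mulrA. Qed.

Lemma tensmxZr m n p q c (A : 'M[C]_(m, n)) (B : 'M[C]_(p, q)) :
  A *t (c *: B) = c *: (A *t B).
Proof. by apply/matrixP=> i j; rewrite !mxE mulrCA. Qed.

Lemma tensmx_suml m n p q I (r : seq I) (P : pred I) (F : I -> 'M[C]_(m, n))
    (B : 'M[C]_(p, q)) :
  (\sum_(i <- r | P i) F i) *t B = \sum_(i <- r | P i) (F i *t B).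
Proof.
by apply: (big_morph (fun A => A *t B)) => [A1 A2|]; rewrite ?tensmxDl ?tens0mx.
Qed.

Lemma tensmx_sumr m n p q I (r : seq I) (P : pred I) (F : I -> 'M[C]_(p, q))
    (A : 'M[C]_(m, n)) :
  A *t (\sum_(i <- r | P i) F i) = \sum_(i <- r | P i) (A *t F i).
Proof.
by apply: (big_morph (fun B => A *t B)) => [B1 B2|]; rewrite ?tensmxDr ?tensmx0.
Qed.

Lemma mxtrace_tens m n (A : 'M[C]_m) (B : 'M[C]_n) : \tr (A *t B) = \tr A * \tr B.
Proof. by rewrite /mxtrace mulr_sum; apply: eq_bigr => i _; rewrite !mxE. Qed.

End Kronecker.

Section LinearMap.
Variables (C : numClosedFieldType) (m : nat) (f : 'M[C]_m -> 'M[C]_m).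
Hypothesis f_lin : linear f.

Lemma linD x y : f (x + y) = f x + f y.
Proof. by case: (GRing.semilinear_linear f_lin) => _ ->. Qed.

Lemma linZ c x : f (c *: x) = c *: f x.
Proof. by case: (GRing.semilinear_linear f_lin) => ->. Qed.

Lemma lin0 : f 0 = 0.
Proof. by have := linZ 0 0; rewrite !scale0r. Qed.

Lemma lin_sum I (r : seq I) (P : pred I) (F : I -> 'M[C]_m) :
  f (\sum_(i <- r | P i) F i) = \sum_(i <- r | P i) f (F i).
Proof. exact: (big_morph f linD lin0). Qed.

End LinearMap.

Definition cspan (C : numClosedFieldType) n (S : 'M[C]_n -> Prop) (X : 'M[C]_n) :=
  exists l : seq (C * 'M[C]_n),
    (forall p, p \in l -> S p.2) /\ X = \sum_(p <- l) p.1 *: p.2.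

Section ComplexSpan.
Variables (C : numClosedFieldType) (n : nat).
Implicit Types (S T : 'M[C]_n -> Prop) (X Y : 'M[C]_n).

Lemma cspan0 S : cspan S 0.
Proof. by exists [::]; rewrite big_nil. Qed.

Lemma cspanD S X Y : cspan S X -> cspan S Y -> cspan S (X + Y).
Proof.
move=> [l1 [S_l1 ->]] [l2 [S_l2 ->]]; exists (l1 ++ l2); rewrite big_cat.
by split=> // p; rewrite mem_cat => /orP[/S_l1|/S_l2].
Qed.

Lemma cspanZ S c X : cspan S X -> cspan S (c *: X).
Proof.
move=> [l [S_l ->]]; exists [seq (c * p.1, p.2) | p <- l]; split.
  by move=> _ /mapP[p /S_l S_p ->].
by rewrite big_map scaler_sumr; apply: eq_bigr => p _; rewrite scalerA.
Qed.

Lemma cspan_mem S X : S X -> cspan S X.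
Proof.
move=> S_X; exists [:: (1, X)]; rewrite big_seq1 scale1r.
by split=> // p; rewrite inE => /eqP->.
Qed.

Lemma cspan_sum S I (r : seq I) (P : pred I) (F : I -> 'M[C]_n) :
  (forall i, P i -> cspan S (F i)) -> cspan S (\sum_(i <- r | P i) F i).
Proof. by move=> S_F; apply: big_ind => //; [exact: cspan0 | exact: cspanD]. Qed.

Lemma cspan_linear (f : 'M[C]_n -> 'M[C]_n) S T X : linear f ->
  (forall Y, S Y -> cspan T (f Y)) -> cspan S X -> cspan T (f X).
Proof.
move=> f_lin ST [l [S_l ->]]; rewrite (lin_sum f_lin) big_seq.
by apply: cspan_sum => p /S_l S_p; rewrite (linZ f_lin); apply/cspanZ/ST.
Qed.

Lemma cspan_trans S T X : (forall Y, S Y -> cspan T Y) -> cspan S X -> cspan T X.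
Proof. by apply: (@cspan_linear id). Qed.

Lemma cspan_fixed (f : 'M[C]_n -> 'M[C]_n) S X : linear f ->
  (forall Y, S Y -> f Y = Y) -> cspan S X -> f X = X.
Proof.
move=> f_lin f_S [l [S_l ->]]; rewrite (lin_sum f_lin) !big_seq.
by apply: eq_bigr => p /S_l S_p; rewrite (linZ f_lin) f_S.
Qed.

Lemma Aff_cspan S X : Aff S X -> cspan S X.
Proof.
move=> [[k [t [s [S_s [_ [_ ->]]]]]] _].
by apply: cspan_sum => a _; apply/cspanZ/cspan_mem.
Qed.

End ComplexSpan.

Lemma cspan_tens (C : numClosedFieldType) m n (S : 'M[C]_m -> Prop)
    (T : 'M[C]_n -> Prop) A B :
  cspan S A -> cspan T B ->
  cspan (fun M => exists a b, S a /\ T b /\ M = a *t b) (A *t B).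
Proof.
move=> [l1 [S_l1 ->]] [l2 [T_l2 ->]].
rewrite tensmx_suml big_seq; apply: cspan_sum => p /S_l1 S_p.
rewrite tensmxZl tensmx_sumr big_seq; apply/cspanZ/cspan_sum => q /T_l2 T_q.
by rewrite tensmxZr; apply/cspanZ/cspan_mem; exists p.2, q.2.
Qed.

Section DensitySpan.
Variables (C : numClosedFieldType) (d : nat).
Implicit Types v w : 'cV[C]_d.

Lemma psd_rank_one v : psd (v *m adjmx v).
Proof.
split=> [|w]; first by rewrite adjmxM adjmxK.
have -> : adjmx w *m (v *m adjmx v) *m w
          = (adjmx w *m v) *m adjmx (adjmx w *m v).
  by rewrite adjmxM adjmxK !mulmxA.
by rewrite mxE big_ord1 /adjmx !mxE -normCK exprn_ge0.
Qed.

Lemma mxtrace_rank_one v : \tr (v *m adjmx v) = \sum_i `|v i 0| ^+ 2.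
Proof.
by apply: eq_bigr => i _; rewrite mxE big_ord1 /adjmx !mxE normCK.
Qed.

Lemma mxtrace_rank_one_gt0 v : v != 0 -> 0 < \tr (v *m adjmx v).
Proof.
move=> v_neq0; have sq_ge0 i : 0 <= `|v i 0| ^+ 2 by exact: exprn_ge0.
rewrite mxtrace_rank_one lt_def sumr_ge0 // andbT.
apply: contra v_neq0 => /eqP/psumr_eq0P v0; apply/eqP/matrixP => i j.
by rewrite [j]ord1 mxE; apply/eqP; rewrite -normr_eq0 -sqrf_eq0 v0.
Qed.

Lemma density_normalized_rank_one v : v != 0 ->
  density ((\tr (v *m adjmx v))^-1 *: (v *m adjmx v)).
Proof.
move=> /mxtrace_rank_one_gt0 tr_gt0; set t := \tr _ in tr_gt0 *.
have [P_herm P_pos] := psd_rank_one v.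
split; last by rewrite mxtraceZ mulVf ?gt_eqF.
split=> [|w].
  rewrite adjmxZ P_herm fmorphV; congr (_^-1 *: _).
  exact: conj_Creal (gtr0_real tr_gt0).
rewrite -scalemxAr -scalemxAl mxE.
by apply: mulr_ge0; [rewrite invr_ge0 ltW | exact: P_pos].
Qed.

(* Polarization through the vectors e_a + e_b, e_a + i e_b, e_a and e_b. *)
Lemma delta_mx_cspan_rank_one (a b : 'I_d) :
  cspan (fun M => exists v : 'cV[C]_d, M = v *m adjmx v) (delta_mx a b).
Proof.
pose ea : 'cV[C]_d := delta_mx a 0; pose eb : 'cV[C]_d := delta_mx b 0.
pose v1 := ea + eb; pose v2 := ea + 'i *: eb.
have -> : delta_mx a b = 2^-1 *: (v1 *m adjmx v1) + ('i / 2) *: (v2 *m adjmx v2)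
   + (- (1 + 'i) / 2) *: (ea *m adjmx ea) + (- (1 + 'i) / 2) *: (eb *m adjmx eb).
  apply/matrixP => x y; rewrite !mxE !big_ord1 /v1 /v2 /ea /eb /adjmx !mxE.
  rewrite ?(rmorphD, rmorphM, rmorph_nat, conjCi) /= !eqxx !andbT conjCi -mulnb natrM.
  set Ax := (x == a)%:R; set Ay := (y == a)%:R; set Bx := (x == b)%:R.
  set By := (y == b)%:R.
  move: (mulCii C); generalize ('i : C) => i ii.
  have two_neq0 : (2 : C) != 0 by rewrite pnatr_eq0.
  transitivity (Ax * By + (i * i + 1) * ((Bx * Ay - Ax * By - i * Bx * By) / 2)).
    by rewrite ii addNr mul0r addr0.
  by field.
by repeat apply: cspanD; apply/cspanZ/cspan_mem; eexists.
Qed.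

Lemma cspan_density (X : 'M[C]_d) : cspan (@density C d) X.
Proof.
have rank_one_density v : cspan (@density C d) (v *m adjmx v).
  have [->|v_neq0] := eqVneq v 0; first by rewrite mul0mx; exact: cspan0.
  have tr_neq0 : \tr (v *m adjmx v) != 0 by rewrite gt_eqF ?mxtrace_rank_one_gt0.
  rewrite -[v *m _](scalerKV tr_neq0).
  exact/cspanZ/cspan_mem/density_normalized_rank_one.
rewrite (matrix_sum_delta X); apply: cspan_sum => i _; apply: cspan_sum => j _.
apply/cspanZ/(cspan_trans _ (delta_mx_cspan_rank_one i j)).
by move=> _ [v ->]; exact: rank_one_density.
Qed.

End DensitySpan.

Section TensorMaps.
Variable C : numClosedFieldType.

Lemma tens_map_linear m n (Phi : 'M[C]_m -> 'M[C]_m) (Psi : 'M[C]_n -> 'M[C]_n) :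
  linear (tens_map Phi Psi).
Proof.
move=> c X Y; rewrite /tens_map scaler_sumr -big_split; apply: eq_bigr => a _.
rewrite scaler_sumr -big_split; apply: eq_bigr => b _.
rewrite scaler_sumr -big_split; apply: eq_bigr => c' _.
rewrite scaler_sumr -big_split; apply: eq_bigr => e _.
by rewrite !mxE scalerDl scalerA.
Qed.

Lemma tens_map_tens m n (Phi : 'M[C]_m -> 'M[C]_m) (Psi : 'M[C]_n -> 'M[C]_n) A B :
  linear Phi -> linear Psi -> tens_map Phi Psi (A *t B) = Phi A *t Psi B.
Proof.
move=> Phi_lin Psi_lin.
rewrite [in RHS](matrix_sum_delta A) [in RHS](matrix_sum_delta B).
rewrite !(lin_sum Phi_lin) tensmx_suml /tens_map; apply: eq_bigr => a _.
rewrite !(lin_sum Phi_lin) tensmx_suml; apply: eq_bigr => b _.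
rewrite (linZ Phi_lin) tensmxZl !(lin_sum Psi_lin) tensmx_sumr scaler_sumr.
apply: eq_bigr => c _.
rewrite !(lin_sum Psi_lin) tensmx_sumr scaler_sumr; apply: eq_bigr => e _.
by rewrite (linZ Psi_lin) tensmxZr scalerA tensmxE.
Qed.

Lemma cspan_tens_map m n (Phi : 'M[C]_m -> 'M[C]_m) (Psi : 'M[C]_n -> 'M[C]_n)
    (S : 'M[C]_m -> Prop) (T : 'M[C]_n -> Prop) X :
  (forall A, cspan S (Phi A)) -> (forall B, cspan T (Psi B)) ->
  cspan (fun M => exists a b, S a /\ T b /\ M = a *t b) (tens_map Phi Psi X).
Proof.
move=> S_Phi T_Psi; do 4 (apply: cspan_sum => ? _).
exact/cspanZ/cspan_tens.
Qed.

Section TensorPower.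
Variables (d : nat) (Phi : 'M[C]_d -> 'M[C]_d) (S : 'M[C]_d -> Prop).

Lemma tens_pow_map_linear k : linear (tens_pow_map Phi k).
Proof. by case: k => [|k] //=; exact: tens_map_linear. Qed.

Lemma cspan_tens_pow_map k (X : 'M[C]_(tdim d k)) :
  (forall Y, cspan S (Phi Y)) -> cspan (tens_pow_set S k) (tens_pow_map Phi k X).
Proof.
move=> S_Phi; elim: k X => [|k IH] X /=; last exact: cspan_tens_map.
have -> : X = X 0 0 *: (1 : 'M[C]_1).
  by apply/matrixP => i j; rewrite [i]ord1 [j]ord1 !mxE mulr1.
exact/cspanZ/cspan_mem.
Qed.

Lemma tens_pow_set_fixed k (Y : 'M[C]_(tdim d k)) : linear Phi ->
  (forall rho, S rho -> Phi rho = rho) ->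
  tens_pow_set S k Y -> tens_pow_map Phi k Y = Y.
Proof.
move=> Phi_lin Phi_S; elim: k Y => [|k IH] Y //= [rho [Z [S_rho [S_Z ->]]]].
by rewrite tens_map_tens ?Phi_S ?IH //; exact: tens_pow_map_linear.
Qed.

Lemma tens_pow_set_hermitian_tr1 k (Y : 'M[C]_(tdim d k)) :
  (forall rho, S rho -> adjmx rho = rho /\ \tr rho = 1) ->
  tens_pow_set S k Y -> adjmx Y = Y /\ \tr Y = 1.
Proof.
move=> S_herm; elim: k Y => [|k IH] Y /=; first by move=> ->; rewrite adjmx1 mxtrace1.
move=> [rho [Z [/S_herm[rho_herm rho_tr] [/IH[Z_herm Z_tr] ->]]]].
by rewrite adjmx_tens mxtrace_tens rho_herm Z_herm rho_tr Z_tr mulr1.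
Qed.

End TensorPower.
End TensorMaps.

(* The real parts of the coefficients already represent a Hermitian X, and the
   trace then forces them to sum to 1. *)
Lemma cspan_hermitian_Aff (C : numClosedFieldType) n (S : 'M[C]_n -> Prop) X :
  (forall Y, S Y -> adjmx Y = Y /\ \tr Y = 1) ->
  density X -> cspan S X -> Aff S X.
Proof.
move=> S_herm X_dens [l [S_l X_def]]; split=> //.
have [[X_herm _] X_tr] := X_dens.
have X_conj : X = \sum_(p <- l) p.1^* *: p.2.
  rewrite -X_herm X_def adjmx_sum !big_seq; apply: eq_bigr => p /S_l S_p.
  by rewrite adjmxZ; case: (S_herm _ S_p) => ->.
have X_re : X = \sum_(p <- l) 'Re p.1 *: p.2.
  have two_neq0 : (2 : C) != 0 by rewrite pnatr_eq0.
  rewrite -[X](scalerKV two_neq0) scaler_nat mulr2n {1}X_def X_conj -scalerDr -big_split.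
  rewrite scaler_sumr; apply: eq_bigr => p _ /=.
  by rewrite -scalerDl scalerA ReE mulrC.
exists (size l), (fun i => 'Re (nth (0, 0) l i).1), (fun i => (nth (0, 0) l i).2).
split; first by move=> a; apply/S_l/mem_nth.
split; first by move=> a; exact: Creal_Re.
split; last by rewrite {1}X_re (big_nth (0, 0)) big_mkord.
transitivity (\sum_(p <- l) 'Re p.1); first by rewrite (big_nth (0, 0)) big_mkord.
rewrite -X_tr {1}X_re raddf_sum !big_seq; apply: eq_bigr => p /S_l S_p.
by rewrite /= mxtraceZ; case: (S_herm _ S_p) => _ ->; rewrite mulr1.
Qed.

Lemma RC_range_cspan (C : numClosedFieldType) d (F' : 'M[C]_d -> Prop)
    (Delta : 'M[C]_d -> 'M[C]_d) :
  linear Delta -> (forall rho, density rho -> density (Delta rho)) ->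
  (forall X, Delta (Delta X) = Delta X) ->
  (forall rho, density rho -> Delta rho = rho -> F' rho) ->
  forall X, cspan F' (Delta X).
Proof.
move=> Delta_lin Delta_dens Delta_idem F'_fixed X.
apply: (cspan_linear Delta_lin _ (cspan_density X)) => rho rho_dens.
exact/cspan_mem/F'_fixed/Delta_idem/Delta_dens.
Qed.

Theorem theorem1 (C : numClosedFieldType) (d N : nat)
  (F : 'M[C]_d -> Prop) (FN : 'M[C]_(tdim d N) -> Prop) (F' : 'M[C]_d -> Prop)
  (Delta : 'M[C]_d -> 'M[C]_d) :
  (1 <= N)%N ->
  (forall rho, F rho -> density rho) ->
  (forall rho, FN rho -> density rho) ->
  (forall sigma, F' sigma -> F sigma) ->
  affine F' ->
  RC_map F F' Delta ->
  (forall X, Delta (Delta X) = Delta X) ->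
  (forall rho, F' rho <-> density rho /\ Delta rho = rho) ->
  (breakable N FN Delta <->
   exists sigma, Aff (tens_pow_set F' N) sigma /\ ~ FN sigma).
Proof.
move=> _ F_dens _ _ _ [[Delta_lin _] [Delta_F _]] Delta_idem F'E.
have range_F' : forall X, cspan F' (Delta X).
  apply: RC_range_cspan => // [rho /Delta_F/F_dens //|rho rho_dens rho_fixed].
  exact/F'E.
have F'_herm rho : F' rho -> adjmx rho = rho /\ \tr rho = 1.
  by case/F'E => -[[rho_herm _] rho_tr] _.
have F'_fixed rho : F' rho -> Delta rho = rho by case/F'E.
split=> [[rho [rho_dens [rho_nfree rho_fixed]]] | [sigma [sigma_Aff sigma_nfree]]].
- exists rho; split=> //; apply: cspan_hermitian_Aff => //.
    by move=> Y; apply: tens_pow_set_hermitian_tr1 F'_herm.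
  by rewrite -rho_fixed; exact: cspan_tens_pow_map range_F'.
- exists sigma; split; first exact: sigma_Aff.2.
  split=> //; apply: cspan_fixed (Aff_cspan sigma_Aff).
    exact: tens_pow_map_linear.
  by move=> Y; apply: tens_pow_set_fixed Delta_lin F'_fixed.
Qed.
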